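(* Let $1\le r\le n$, let $B^{(1)},\dots,B^{(r)}\in\mathbb{C}^{n\times n}$ be Hermitian, and let $\tilde g(U)=\sum_{q=1}^ru_q^HB^{(q)}u_q$ for $U=(u_1,\dots,u_n)\in\mathcal{U}_n$. Let $U\in\mathcal{U}_n$ and $1\le i<j\le n$ with $i\le r$. Then there exist a real symmetric $M\in\mathbb{R}^{3\times3}$ and $C\in\mathbb{R}$ such that $\tilde g(UG_{ij}(\Psi(\theta,\phi)))=z_{1,1}(\theta,\phi)^TMz_{1,1}(\theta,\phi)+C$ for all $\theta,\phi\in\mathbb{R}$.
   Context: $\mathcal{U}_n$ is the group of $n\times n$ unitary matrices. $G_{ij}(\Psi)$ is the $n\times n$ identity with entries $(i,i),(i,j),(j,i),(j,j)$ replaced by $\Psi_{11},\Psi_{12},\Psi_{21},\Psi_{22}$; $\Psi(\theta,\phi)=\begin{bmatrix}\cos\theta&-\sin\theta e^{\mathrm{i}\phi}\\ \sin\theta e^{-\mathrm{i}\phi}&\cos\theta\end{bmatrix}$; $z_{1,1}(\theta,\phi)=(\cos\theta,-\sin\theta\cos\phi,-\sin\theta\sin\phi)^T$. *)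

From HB Require Import structures.
From mathcomp Require Import all_boot all_order all_algebra.
From mathcomp Require Import complex.
From mathcomp Require Import reals trigo.
Set Implicit Arguments. Unset Strict Implicit. Unset Printing Implicit Defensive.
Import Order.TTheory GRing.Theory Num.Theory.
Local Open Scope ring_scope.
Local Open Scope complex_scope.

Section Defs.
Variable R : realType.
Local Notation C := R[i].

Definition ctrmx (m n : nat) (A : 'M[C]_(m, n)) : 'M[C]_(n, m) :=
  map_mx (fun z : C => z^*) A^T.

Definition hermitian_mx (n : nat) (A : 'M[C]_n) : Prop := ctrmx A = A.

Definition unitary_mx (n : nat) (U : 'M[C]_n) : Prop := U *m ctrmx U = 1%:M.

Definition Psi (theta phi : R) : 'M[C]_2 :=
  let e := (cos phi +i* sin phi) in
  let e' := (cos phi +i* (- sin phi)) in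
  \matrix_(a < 2, b < 2)
    if (a == 0%N :> nat) && (b == 0%N :> nat) then (cos theta)%:C
    else if (a == 0%N :> nat) then - ((sin theta)%:C * e)
    else if (b == 0%N :> nat) then (sin theta)%:C * e'
    else (cos theta)%:C.

Definition Gmx (n : nat) (i j : 'I_n) (P : 'M[C]_2) : 'M[C]_n :=
  \matrix_(k < n, l < n)
    if (k == i) && (l == i) then P 0 0
    else if (k == i) && (l == j) then P 0 1
    else if (k == j) && (l == i) then P 1 0
    else if (k == j) && (l == j) then P 1 1
    else (k == l)%:R.

Definition z11 (theta phi : R) : 'cV[R]_3 :=
  \col_(a < 3)
    if (a == 0%N :> nat) then cos theta
    else if (a == 1%N :> nat) then - (sin theta * cos phi)
    else - (sin theta * sin phi).

Definition gtilde (n r : nat) (hr : (r <= n)%N) (B : 'I_r -> 'M[C]_n)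
  (U : 'M[C]_n) : C :=
  \sum_(q < r)
    (ctrmx (col (widen_ord hr q) U) *m B q *m col (widen_ord hr q) U) 0 0.

End Defs.

From HB Require Import structures.
From mathcomp Require Import all_boot all_order all_algebra.
From mathcomp Require Import complex.
From mathcomp Require Import reals trigo.
From mathcomp Require Import ring lra.
Import Order.TTheory GRing.Theory Num.Theory.
Local Open Scope ring_scope.
Local Open Scope complex_scope.

(* Right multiplication by G_ij(Psi(theta, phi)) only replaces the columns
   u_i, u_j of U by c u_i + s e^{-i phi} u_j and -s e^{i phi} u_i + c u_j
   (c = cos theta, s = sin theta).  For a Hermitian B, expanding u^H B u on
   such a column gives alpha c^2 + beta s^2 + 2 c s (g1 cos phi + g2 sin phi)
   with alpha, beta the (real) diagonal values and g1 + i g2 = u_i^H B u_j;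
   since z_{1,1} = (c, -s cos phi, -s sin phi), this is a symmetric quadratic
   form in z_{1,1}.  All other columns contribute real constants. *)

Set Implicit Arguments.
Unset Strict Implicit.

Section HermitianForm.
Variable R : realType.
Local Notation C := R[i].

Lemma ctrmx_mul m n p (A : 'M[C]_(m, n)) (B : 'M[C]_(n, p)) :
  ctrmx (A *m B) = ctrmx B *m ctrmx A.
Proof. by rewrite /ctrmx trmx_mul map_mxM. Qed.

Lemma ctrmxK m n (A : 'M[C]_(m, n)) : ctrmx (ctrmx A) = A.
Proof. by apply/matrixP => a b; rewrite !mxE conjcK. Qed.

Lemma ctrmxD m n (A B : 'M[C]_(m, n)) : ctrmx (A + B) = ctrmx A + ctrmx B.
Proof. by apply/matrixP => a b; rewrite !mxE rmorphD. Qed.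

Lemma ctrmxZ m n (a : C) (A : 'M[C]_(m, n)) : ctrmx (a *: A) = a^* *: ctrmx A.
Proof. by apply/matrixP => k l; rewrite !mxE rmorphM. Qed.

Definition hform n (A : 'M[C]_n) (x y : 'cV[C]_n) : C := (ctrmx x *m A *m y) 0 0.

Lemma hform_comb2 n (A : 'M[C]_n) (a b : C) (x y : 'cV[C]_n) :
  let v := a *: x + b *: y in
  hform A v v = a^* * a * hform A x x + a^* * b * hform A x y
              + b^* * a * hform A y x + b^* * b * hform A y y.
Proof.
rewrite /hform ctrmxD !ctrmxZ !mulmxDl !mulmxDr -!scalemxAl -!scalemxAr.
by rewrite !mxE; ring.
Qed.

Lemma hform_conj n (A : 'M[C]_n) (x y : 'cV[C]_n) :
  hermitian_mx A -> hform A y x = (hform A x y)^*.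
Proof.
move=> hA; have -> : (hform A x y)^* = (ctrmx (ctrmx x *m A *m y)) 0 0.
  by rewrite /hform !mxE.
by rewrite !ctrmx_mul ctrmxK hA mulmxA.
Qed.

Lemma hform_real n (A : 'M[C]_n) (x : 'cV[C]_n) :
  hermitian_mx A -> hform A x x = (complex.Re (hform A x x))%:C.
Proof.
move=> /(hform_conj x x); case: (hform A x x) => a b /= [b_eq].
by rewrite /real_complex_def; congr (_ +i* _); lra.
Qed.

End HermitianForm.

Section GivensColumns.
Variable R : realType.
Local Notation C := R[i].

Lemma col_Gmx n (i j k : 'I_n) (P : 'M[C]_2) : i != j ->
  col k (Gmx i j P) =
  if k == i then P 0 0 *: col i 1%:M + P 1 0 *: col j 1%:M
  else if k == j then P 0 1 *: col i 1%:M + P 1 1 *: col j 1%:M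
  else col k 1%:M.
Proof.
move=> nij; apply/matrixP => l z; rewrite !mxE.
have [->|kNi] := eqVneq k i; last have [->|kNj] := eqVneq k j;
have [->|lNi] := eqVneq l i; try have [->|lNj] := eqVneq l j;
rewrite ?mxE ?eqxx ?(negbTE nij) 1?(eq_sym j) ?(negbTE nij) ?andbT ?andbF /=;
by [ring | rewrite (negbTE lNi) (negbTE lNj) /=; ring].
Qed.

Lemma col_mulmx_Gmx n (i j k : 'I_n) (P : 'M[C]_2) (U : 'M[C]_n) : i != j ->
  col k (U *m Gmx i j P) =
  if k == i then P 0 0 *: col i U + P 1 0 *: col j U
  else if k == j then P 0 1 *: col i U + P 1 1 *: col j U
  else col k U.
Proof.
move=> nij; rewrite colE -mulmxA -colE col_Gmx //.
have mulmx_col1 l : U *m col l 1%:M = col l U by rewrite col1 colE.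
by case: ifP => _; [|case: ifP => _]; rewrite ?mulmxDr -?scalemxAr ?mulmx_col1.
Qed.

End GivensColumns.

Section Z11Quadratic.
Variable R : realType.
Local Notation C := R[i].

Definition z11_quadratic (f : R -> R -> C) : Prop :=
  exists (M : 'M[R]_3) (c : R), M^T = M /\
    forall theta phi,
      f theta phi = (((z11 theta phi)^T *m M *m z11 theta phi) 0 0 + c)%:C.

Lemma eq_z11_quadratic (f g : R -> R -> C) :
  (forall theta phi, f theta phi = g theta phi) ->
  z11_quadratic f -> z11_quadratic g.
Proof.
by move=> fg [M [c [symM fE]]]; exists M, c; split=> // theta phi; rewrite -fg.
Qed.

Lemma z11_quadratic_cst (c : R) : z11_quadratic (fun _ _ => c%:C).
Proof.
by exists 0, c; split=> [|theta phi]; rewrite ?trmx0 ?mulmx0 ?mul0mx ?mxE ?add0r.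
Qed.

Lemma z11_quadraticD (f g : R -> R -> C) :
  z11_quadratic f -> z11_quadratic g ->
  z11_quadratic (fun theta phi => f theta phi + g theta phi).
Proof.
move=> [M [c [symM fE]]] [N [d [symN gE]]].
exists (M + N), (c + d); split=> [|theta phi]; first by rewrite linearD /= symM symN.
by rewrite fE gE -rmorphD mulmxDr mulmxDl [in RHS]mxE addrACA.
Qed.

Lemma z11_quadratic_sum (I : finType) (F : I -> R -> R -> C) :
  (forall q, z11_quadratic (F q)) ->
  z11_quadratic (fun theta phi => \sum_q F q theta phi).
Proof.
move=> Fq; rewrite unlock; elim: (index_enum I) => [|q s IHs] /=.
  exact: z11_quadratic_cst 0.
exact: z11_quadraticD.
Qed.

Definition rot_quad (alpha beta g1 g2 theta phi : R) : R :=
  alpha * cos theta ^+ 2 + beta * sin theta ^+ 2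
  + 2 * cos theta * sin theta * (g1 * cos phi + g2 * sin phi).

Lemma rot_quadE alpha beta g1 g2 theta phi :
  rot_quad alpha beta g1 g2 theta phi =
  alpha * cos theta ^+ 2 + beta * (sin theta ^+ 2 * (cos phi ^+ 2 + sin phi ^+ 2))
  + 2 * cos theta * sin theta * (g1 * cos phi + g2 * sin phi).
Proof. by rewrite cos2Dsin2 mulr1. Qed.

Lemma z11_quadratic_rot_quad (alpha beta g1 g2 : R) :
  z11_quadratic (fun theta phi => (rot_quad alpha beta g1 g2 theta phi)%:C).
Proof.
pose rows := [:: [:: alpha; - g1; - g2]; [:: - g1; beta; 0]; [:: - g2; 0; beta]].
exists (\matrix_(k < 3, l < 3) nth 0 (nth [::] rows k) l), 0.
split=> [|theta phi].
  by apply/matrixP => -[[|[|[|?]]] ?] [[|[|[|?]]] ?]; rewrite !mxE.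
rewrite addr0 !mxE !big_ord_recr !big_ord0 /= !mxE !big_ord_recr !big_ord0 /= !mxE /=.
by rewrite rot_quadE; congr (_%:C); ring.
Qed.

End Z11Quadratic.

Section GivensHermitianForm.
Variable R : realType.
Local Notation C := R[i].
Variables (n : nat) (A : 'M[C]_n) (x y : 'cV[C]_n).
Hypothesis hA : hermitian_mx A.

Lemma hform_Psi_col0 theta phi :
  let v := Psi theta phi 0 0 *: x + Psi theta phi 1 0 *: y in
  hform A v v = (rot_quad (complex.Re (hform A x x)) (complex.Re (hform A y y))
                  (complex.Re (hform A x y)) (complex.Im (hform A x y)) theta phi)%:C.
Proof.
rewrite /= hform_comb2 (hform_conj x y hA).
move: (hform_real x hA) (hform_real y hA).
case: (hform A x x) => a ?; case: (hform A y y) => b ?.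
case: (hform A x y) => g1 g2 /= -> ->.
rewrite !mxE /= rot_quadE /real_complex_def; simpc.
by congr (_ +i* _); ring.
Qed.

Lemma hform_Psi_col1 theta phi :
  let v := Psi theta phi 0 1 *: x + Psi theta phi 1 1 *: y in
  hform A v v = (rot_quad (complex.Re (hform A y y)) (complex.Re (hform A x x))
                  (- complex.Re (hform A x y)) (- complex.Im (hform A x y))
                  theta phi)%:C.
Proof.
rewrite /= hform_comb2 (hform_conj x y hA).
move: (hform_real x hA) (hform_real y hA).
case: (hform A x x) => a ?; case: (hform A y y) => b ?.
case: (hform A x y) => g1 g2 /= -> ->.
rewrite !mxE /= rot_quadE /real_complex_def; simpc.
by congr (_ +i* _); ring.
Qed.

End GivensHermitianForm.

Theorem corollary3p6 (R : realType) (n r : nat) (hr1 : (1 <= r)%N)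
  (hr : (r <= n)%N) (B : 'I_r -> 'M[R[i]]_n)
  (hB : forall q, hermitian_mx (B q))
  (U : 'M[R[i]]_n) (hU : unitary_mx U) (i j : 'I_n)
  (hij : (i < j)%N) (hir : (i < r)%N) :
  exists (M : 'M[R]_3) (c : R), M^T = M /\
    forall theta phi : R,
      gtilde hr B (U *m Gmx i j (Psi theta phi)) =
      (((z11 theta phi)^T *m M *m z11 theta phi) 0 0 + c)%:C.
Proof.
have nij : i != j by rewrite neq_ltn hij.
suff [M [c [symM gE]]] :
    z11_quadratic (fun theta phi => gtilde hr B (U *m Gmx i j (Psi theta phi))).
  by exists M, c.
apply: eq_z11_quadratic (z11_quadratic_sum (F := fun q theta phi =>
  let v := col (widen_ord hr q) (U *m Gmx i j (Psi theta phi)) in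
  hform (B q) v v) _) => // q.
set k := widen_ord hr q.
have [ki|kNi] := eqVneq k i; last have [kj|kNj] := eqVneq k j.
- apply: eq_z11_quadratic (z11_quadratic_rot_quad _ _ _ _) => theta phi.
  by rewrite /= col_mulmx_Gmx // ki eqxx hform_Psi_col0.
- apply: eq_z11_quadratic (z11_quadratic_rot_quad _ _ _ _) => theta phi.
  by rewrite /= col_mulmx_Gmx // kj eqxx eq_sym (negbTE nij) hform_Psi_col1.
- pose u := col k U.
  apply: eq_z11_quadratic (z11_quadratic_cst (complex.Re (hform (B q) u u))).
  by move=> theta phi; rewrite /= col_mulmx_Gmx // (negbTE kNi) (negbTE kNj) -hform_real.
Qed.
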